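(* Let $M$ be a magma satisfying $(xy)z = x(yz)$ and $x(yx) = x$ for all $x,y,z\in M$. Then $M$ satisfies $xy = x$ for all $x,y\in M$ if and only if $M$ avoids the $2$-element right zero band $2_{RZ}$ on $\{0,1\}$ with Cayley table \[ \begin{array}{c|cc} 2_{RZ} & 0 & 1 \\ \hline 0 & 0 & 1 \\ 1 & 0 & 1 \end{array}. \]
   Context: A magma is a nonempty set with a binary operation, written by juxtaposition. A magma $M$ avoids a magma $F$ if no submagma of $M$ is isomorphic to $F$. *)

Definition submagma {M : Type} (op : M -> M -> M) (S : M -> Prop) : Prop :=
  (exists x, S x) /\ (forall x y, S x -> S y -> S (op x y)).

Definition sub_isomorphic {M F : Type} (opM : M -> M -> M) (S : M -> Prop)
  (opF : F -> F -> F) : Prop :=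
  exists f : F -> M,
    (forall a, S (f a)) /\
    (forall a b, f a = f b -> a = b) /\
    (forall y, S y -> exists a, f a = y) /\
    (forall a b, f (opF a b) = opM (f a) (f b)).

Definition avoids {M F : Type} (opM : M -> M -> M) (opF : F -> F -> F) : Prop :=
  ~ (exists S : M -> Prop, submagma opM S /\ sub_isomorphic opM S opF).

Definition RZ2 (x y : bool) : bool := y.

From Stdlib Require Import Classical.

(* The hypotheses say that M is a rectangular band.  A left zero magma cannot
   contain 2_RZ, since an injective homomorphism transports xy = x.  Conversely,
   if xy <> x for some x, y, then {x, xy} is a right zero subband of size two. *)

Lemma left_zero_avoids {M F : Type} (op : M -> M -> M) (opF : F -> F -> F)
  (a b : F) (left_zero : forall x y, op x y = x) (opF_ab : opF a b <> a) :
  avoids op opF.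
Proof.
  intros [S [_ [f [_ [f_inj [_ f_hom]]]]]].
  apply opF_ab, f_inj.
  rewrite f_hom; apply left_zero.
Qed.

Lemma right_zero_pair_not_avoids {M : Type} (op : M -> M -> M) (a b : M)
  (a_neq_b : a <> b)
  (op_aa : op a a = a) (op_ab : op a b = b)
  (op_ba : op b a = a) (op_bb : op b b = b) :
  ~ avoids op RZ2.
Proof.
  intros avoids_RZ2; apply avoids_RZ2.
  exists (fun z => z = a \/ z = b); split.
  - split; [exists a; left; reflexivity|].
    intros x y [-> | ->] [-> | ->]; auto.
  - exists (fun c : bool => if c then b else a); repeat split.
    + intros [|]; auto.
    + intros [|] [|] f_eq; auto; contradiction a_neq_b; auto.
    + intros z [-> | ->]; [exists false | exists true]; reflexivity.
    + intros [|] [|]; simpl; auto.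
Qed.

Section RectangularBand.

Variables (M : Type) (op : M -> M -> M).
Hypothesis assoc : forall x y z, op (op x y) z = op x (op y z).
Hypothesis hxyx : forall x y, op x (op y x) = x.

Lemma rectangular_band_idem (x : M) : op x x = x.
Proof.
  pose proof (hxyx x (op x x)) as x_xxx.
  rewrite assoc, (hxyx x x) in x_xxx; exact x_xxx.
Qed.

Lemma rectangular_band_mulKl (x y : M) : op x (op x y) = op x y.
Proof. rewrite <- assoc, rectangular_band_idem; reflexivity. Qed.

Lemma rectangular_band_mulKr (x y : M) : op (op x y) x = x.
Proof. rewrite assoc; apply hxyx. Qed.

End RectangularBand.

Theorem mainTheorem6 (M : Type) (op : M -> M -> M) (m0 : M)
  (assoc : forall x y z, op (op x y) z = op x (op y z))
  (hxyx : forall x y, op x (op y x) = x) :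
  (forall x y, op x y = x) <-> avoids op RZ2.
Proof.
  split.
  - intros left_zero.
    apply (left_zero_avoids op RZ2 false true left_zero); discriminate.
  - intros avoids_RZ2 x y.
    destruct (classic (op x y = x)) as [xy_eq | xy_neq]; [exact xy_eq|].
    contradict avoids_RZ2.
    apply (right_zero_pair_not_avoids op x (op x y)); auto.
    + apply (rectangular_band_idem M op assoc hxyx).
    + apply (rectangular_band_mulKl M op assoc hxyx).
    + apply (rectangular_band_mulKr M op assoc hxyx).
    + apply (rectangular_band_idem M op assoc hxyx).
Qed.
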